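(* Let $p$ be a prime and $\sigma:\mathcal A_m\to\mathcal A_m^*$ a $p$-uniform morphism. For every $n\in\mathbb{N}$, $$R_{n+1}(T)=M_\sigma(T^{p^n})R_n(T),$$ where $R_n(T)$ is the column vector $(P_{\sigma^n(0)}(T),\dots,P_{\sigma^n(m-1)}(T))^{\mathsf T}$.
   Context: $\mathcal A_m=\{0,\dots,m-1\}$, letters viewed in $\mathbb{F}_p$. For $W=w_0\cdots w_{r-1}$, $P_W(T)=\sum_{j=0}^{r-1}w_{r-1-j}T^j$, and $\beta_{W,j}(T)=\sum_{i:\,w_i=j}T^{r-1-i}\in\mathbb{F}_p[T]$ (zero if $j$ does not occur). The matrix associated with $\sigma$ is the $m\times m$ matrix $M_\sigma(T)=(\beta_{\sigma(i),j}(T))_{0\le i,j\le m-1}$ with entries in $\mathbb{F}_p[T]$. A $p$-uniform morphism sends each letter to a word of length $p$. *)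

From HB Require Import structures.
From mathcomp Require Import all_boot all_order all_algebra.
Set Implicit Arguments. Unset Strict Implicit. Unset Printing Implicit Defensive.
Import GRing.Theory.
Local Open Scope ring_scope.

Definition morph_word (m : nat) (sigma : 'I_m -> seq 'I_m) (w : seq 'I_m) : seq 'I_m :=
  flatten (map sigma w).

Definition morph_iter (m : nat) (sigma : 'I_m -> seq 'I_m) (n : nat) (a : 'I_m) : seq 'I_m :=
  iter n (morph_word sigma) [:: a].

Definition p_uniform (p m : nat) (sigma : 'I_m -> seq 'I_m) : Prop :=
  forall a : 'I_m, size (sigma a) = p.

Definition Pw (p m : nat) (W : seq 'I_m) : {poly 'F_p} :=
  let ws := map (fun a : 'I_m => (nat_of_ord a)%:R : 'F_p) W in
  \sum_(j < size W) ws`_(size W - 1 - j) *: 'X^j.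

Definition betaw (p m : nat) (W : seq 'I_m) (j : 'I_m) : {poly 'F_p} :=
  \sum_(i < size W | nth 0%N (map (@nat_of_ord m) W) i == nat_of_ord j) 'X^(size W - 1 - i).

Definition Msigma (p m : nat) (sigma : 'I_m -> seq 'I_m) : 'M[{poly 'F_p}]_m :=
  \matrix_(i < m, j < m) betaw p (sigma i) j.

Definition Rvec (p m : nat) (sigma : 'I_m -> seq 'I_m) (n : nat) : 'cV[{poly 'F_p}]_m :=
  \col_(i < m) Pw p (morph_iter sigma n i).

(* Write w := sigma(i) = w_0 ... w_(p-1).  Then sigma^(n+1)(i) is the
   concatenation of the words sigma^n(w_k), each of length p^n, and since
   P_(uv) = P_u T^|v| + P_v, the polynomial P_(sigma^(n+1)(i)) is the sum over
   k of P_(sigma^n(w_k)) T^(p^n (p-1-k)).  Grouping the terms by the letter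
   j = w_k turns the powers of T^(p^n) into beta_(w,j)(T^(p^n)). *)

From HB Require Import structures.
From mathcomp Require Import all_boot all_order all_algebra.
Import GRing.Theory.
Local Open Scope ring_scope.

Lemma size_flatten_map_const {A B : Type} {f : A -> seq B} {L : nat} :
  (forall a, size (f a) = L) ->
  forall w : seq A, size (flatten (map f w)) = (L * size w)%N.
Proof.
move=> hf; elim=> [|a w IHw] /=; first by rewrite muln0.
by rewrite size_cat IHw hf mulnS.
Qed.

Section WordPolynomials.
Variables (p m : nat).

Lemma Pw_nil : Pw p ([::] : seq 'I_m) = 0.
Proof. by rewrite /Pw big_ord0. Qed.

Lemma Pw_cons (a : 'I_m) (w : seq 'I_m) :
  Pw p (a :: w) = (a%:R : 'F_p) *: 'X^(size w) + Pw p w.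
Proof.
rewrite /Pw /= big_ord_recr /= subn1 subnn addrC; congr (_ + _).
apply: eq_bigr => j _ /=.
by rewrite -[(size w - j)%N](@subnSK j (size w)) // -subnDA add1n.
Qed.

Lemma Pw_cat (u v : seq 'I_m) :
  Pw p (u ++ v) = Pw p u * 'X^(size v) + Pw p v.
Proof.
elim: u => [|a u IH] /=; first by rewrite Pw_nil mul0r add0r.
by rewrite !Pw_cons IH size_cat mulrDl addrA exprD -scalerAl.
Qed.

Lemma betaw_nil (j : 'I_m) : betaw p [::] j = 0.
Proof. by rewrite /betaw big_ord0. Qed.

Lemma betaw_cons (a : 'I_m) (w : seq 'I_m) (j : 'I_m) :
  betaw p (a :: w) j = (if a == j then 'X^(size w) else 0) + betaw p w j.
Proof.
rewrite /betaw /= big_mkcond big_ord_recl /= subn1 subn0; congr (_ + _).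
rewrite [RHS]big_mkcond; apply: eq_bigr => i _ /=.
by rewrite -subnDA.
Qed.

Lemma Pw_flatten_uniform (f : 'I_m -> seq 'I_m) (L : nat) :
  (forall a, size (f a) = L) ->
  forall w : seq 'I_m,
  Pw p (flatten (map f w)) = \sum_(j < m) (betaw p w j \Po 'X^L) * Pw p (f j).
Proof.
move=> hf; elim=> [|a w IH] /=.
  by rewrite Pw_nil big1 // => j _; rewrite betaw_nil comp_poly0 mul0r.
rewrite Pw_cat IH (size_flatten_map_const hf).
under eq_bigr => j _ do rewrite betaw_cons comp_polyD mulrDl.
rewrite big_split /=; congr (_ + _).
rewrite (bigD1 a) //= eqxx big1 ?addr0.
  by rewrite comp_Xn_poly -exprM mulrC mulnC.
by move=> j /negbTE; rewrite eq_sym => ->; rewrite comp_poly0 mul0r.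
Qed.

End WordPolynomials.

Section MorphismIterates.
Variables (m : nat) (sigma : 'I_m -> seq 'I_m).

Lemma morph_word_flatten (ss : seq (seq 'I_m)) :
  morph_word sigma (flatten ss) = flatten (map (morph_word sigma) ss).
Proof.
elim: ss => [|s ss IH] //=.
by rewrite -IH /morph_word map_cat flatten_cat.
Qed.

Lemma iter_morph_word (n : nat) (w : seq 'I_m) :
  iter n (morph_word sigma) w = flatten (map (morph_iter sigma n) w).
Proof.
elim: n => [|n IH] /=; first by rewrite flatten_map1 map_id.
by rewrite IH morph_word_flatten -map_comp.
Qed.

Lemma morph_iterS (n : nat) (a : 'I_m) :
  morph_iter sigma n.+1 a = flatten (map (morph_iter sigma n) (sigma a)).
Proof. by rewrite /morph_iter iterSr iter_morph_word /morph_word /= cats0. Qed.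

Lemma size_morph_iter (p : nat) (n : nat) (a : 'I_m) :
  p_uniform p sigma -> size (morph_iter sigma n a) = (p ^ n)%N.
Proof.
move=> hunif; elim: n a => [|n IH] a //.
by rewrite morph_iterS (size_flatten_map_const IH) hunif expnS mulnC.
Qed.

End MorphismIterates.

Theorem lemma4p9 (p m : nat) (hp : prime p) (sigma : 'I_m -> seq 'I_m)
  (hunif : p_uniform p sigma) (n : nat) :
  Rvec p sigma n.+1 =
  map_mx (fun q : {poly 'F_p} => q \Po 'X^(p ^ n)) (Msigma p sigma) *m Rvec p sigma n.
Proof.
apply/matrixP => i k; rewrite !mxE morph_iterS.
rewrite (@Pw_flatten_uniform _ _ _ (p ^ n)) => [|a]; last exact: size_morph_iter.
by apply: eq_bigr => j _; rewrite !mxE.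
Qed.
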